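(* Let $k,n\in\mathbb N^+$ and $\mathbf C=(c_0,\dots,c_k)\in\{0,1\}^{k+1}$, $\mathbf C'=(1,\dots,1)-\mathbf C=(c'_0,\dots,c'_k)$. For every integer $m$ with $c_k-1\le m\le n+c_k$, $$O_{\mathbf C}(n,m)=O_{\mathbf C'}(n,n-m),$$ and for every integer $m$ with $0\le m\le n+1$, $$O_{\mathbf C}(n,m+c_k-1)=O_{\mathbf C'}(n,n-m+c'_k).$$
   Context: Consider $k$-tuples $(\pi_1,\dots,\pi_k)$ of permutations of $\{1,\dots,n\}$. A position $\alpha$ is a record of a permutation $\pi$ if $\pi(\alpha)<\pi(\alpha')$ for every $\alpha'<\alpha$ (position $1$ is always a record); equivalently records index the minimal elements of the points $(\alpha,\pi(\alpha))$ under strict componentwise domination. For a tuple, let $l_\alpha$ be the number of $\beta\in\{1,\dots,k\}$ for which $\alpha$ is a record of $\pi_\beta$. For $\mathbf X\in\{0,1\}^{k+1}$, the $\mathbf X$ sequential optimization set of the tuple is $S=\{\alpha:x_{l_\alpha}=1\}$, with weight $|S|$, and for an integer $m$, $O_{\mathbf X}(n,m)$ is the number of $k$-tuples whose weight equals $m$ (so it is $0$ for $m<0$ or $m>n$). *)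

From mathcomp Require Import all_boot all_order all_algebra all_fingroup.
Set Implicit Arguments. Unset Strict Implicit. Unset Printing Implicit Defensive.

(* Positions and values are 0-indexed: {1..n} is modelled by 'I_n. *)

Definition is_record (n : nat) (pi : {perm 'I_n}) (a : 'I_n) : bool :=
  [forall a' : 'I_n, (a' < a)%N ==> (pi a < pi a')%N].

Definition rec_count (k n : nat) (t : {ffun 'I_k -> {perm 'I_n}}) (a : 'I_n) : nat :=
  #|[set b : 'I_k | is_record (t b) a]|.

Definition seq_opt_set (k n : nat) (X : {ffun 'I_k.+1 -> bool})
  (t : {ffun 'I_k -> {perm 'I_n}}) : {set 'I_n} :=
  [set a : 'I_n | X (inord (rec_count t a))].

Definition seq_opt_weight (k n : nat) (X : {ffun 'I_k.+1 -> bool})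
  (t : {ffun 'I_k -> {perm 'I_n}}) : nat := #|seq_opt_set X t|.

Definition O_count (k : nat) (X : {ffun 'I_k.+1 -> bool}) (n : nat) (m : int) : nat :=
  #|[set t : {ffun 'I_k -> {perm 'I_n}} | Posz (seq_opt_weight X t) == m]|.

Definition compl_vec (k : nat) (C : {ffun 'I_k.+1 -> bool}) : {ffun 'I_k.+1 -> bool} :=
  [ffun i => ~~ C i].

From mathcomp Require Import all_boot all_order all_algebra all_fingroup.
From mathcomp Require Import zify.
Set Implicit Arguments. Unset Strict Implicit. Unset Printing Implicit Defensive.
Import Order.TTheory GRing.Theory Num.Theory.
Local Open Scope ring_scope.

(* Complementing the vector X complements the X sequential optimization set,
   so [t] has X-weight [m] iff it has X'-weight [n - m]; both identities are
   instances of this one, valid for every integer [m]. *)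

Lemma seq_opt_set_compl (k n : nat) (C : {ffun 'I_k.+1 -> bool})
    (t : {ffun 'I_k -> {perm 'I_n}}) :
  seq_opt_set (compl_vec C) t = ~: seq_opt_set C t.
Proof. by apply/setP => a; rewrite !inE ffunE. Qed.

Lemma seq_opt_weight_le (k n : nat) (C : {ffun 'I_k.+1 -> bool})
    (t : {ffun 'I_k -> {perm 'I_n}}) :
  (seq_opt_weight C t <= n)%N.
Proof. by rewrite -[n in (_ <= n)%N]card_ord max_card. Qed.

Lemma seq_opt_weight_compl (k n : nat) (C : {ffun 'I_k.+1 -> bool})
    (t : {ffun 'I_k -> {perm 'I_n}}) :
  seq_opt_weight (compl_vec C) t = (n - seq_opt_weight C t)%N.
Proof.
by rewrite /seq_opt_weight seq_opt_set_compl cardsCs setCK card_ord.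
Qed.

Lemma O_count_compl (k n : nat) (C : {ffun 'I_k.+1 -> bool}) (m : int) :
  O_count C n m = O_count (compl_vec C) n (n%:Z - m).
Proof.
apply: eq_card => t; rewrite !inE seq_opt_weight_compl -subzn ?seq_opt_weight_le //.
have := seq_opt_weight_le C t; move: (seq_opt_weight C t) => w w_le_n.
by apply/eqP/eqP; lia.
Qed.

Theorem lemma3p1 (k n : nat) (C : {ffun 'I_k.+1 -> bool}) :
  (0 < k)%N -> (0 < n)%N ->
  (forall m : int,
     (C ord_max)%:Z - 1 <= m <= n%:Z + (C ord_max)%:Z ->
     O_count C n m = O_count (compl_vec C) n (n%:Z - m)) /\
  (forall m : int,
     0 <= m <= n%:Z + 1 ->
     O_count C n (m + (C ord_max)%:Z - 1) =
     O_count (compl_vec C) n (n%:Z - m + ((compl_vec C) ord_max)%:Z)).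
Proof.
move=> _ _; split=> m _; rewrite O_count_compl //.
by congr O_count; rewrite ffunE; case: (C ord_max) => /=; lia.
Qed.
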